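(* Let $r\in(0,1)$ and $\lambda(r)=\ln\frac{1+r}{1-r}$. Let $\overline{S}_{\lambda(r)}=\{z\in\mathbb{S}: d_{\mathbb{S}}(z,0)\leqslant\lambda(r)\}$. Then $$\overline{S}_{\lambda(r)}\subset\left[-\frac{4}{\pi}\arctan r,\frac{4}{\pi}\arctan r\right]\times\left[-\frac{2}{\pi}\lambda(r),\frac{2}{\pi}\lambda(r)\right]$$ (as a subset of $\mathbb{C}\cong\mathbb{R}^2$, real part times imaginary part), and moreover $$\{\operatorname{Re} z : z\in \overline{S}_{\lambda(r)}\}=\left[-\frac{4}{\pi}\arctan r,\frac{4}{\pi}\arctan r\right].$$
   Context: $\mathbb{S}=\{z\in\mathbb{C}:-1<\operatorname{Re} z<1\}$. The hyperbolic density of $\mathbb{S}$ is $\rho_{\mathbb{S}}(z)=\frac{\pi}{2}\big/\cos\left(\frac{\pi}{2}\operatorname{Re} z\right)$ and $d_{\mathbb{S}}(z_1,z_2)=\inf_\gamma\int_\gamma\rho_{\mathbb{S}}(z)|dz|$ over $C^1$ curves $\gamma$ in $\mathbb{S}$ joining $z_1$ to $z_2$ (this is the hyperbolic distance of $\mathbb{S}$ transported from the unit disc $\mathbb{U}$, whose density is $\frac{2}{1-|z|^2}$, by the conformal map $z\mapsto\tan(\pi z/4)$ from $\mathbb{S}$ onto $\mathbb{U}$). *)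

From Stdlib Require Import Reals.
From Coquelicot Require Import Coquelicot.
Open Scope R_scope.

Definition ReP (z : R * R) : R := fst z.
Definition ImP (z : R * R) : R := snd z.

Definition in_strip (z : R * R) : Prop := -1 < ReP z < 1.

Definition rho_S (z : R * R) : R := (PI / 2) / cos (PI / 2 * ReP z).

(* A C^1 curve gamma = (gx, gy) : [0,1] -> S from z1 to z2.
   (Differentiability at each t in [0,1] is two-sided; any C^1 curve on [0,1]
   extends to such a curve, so the infimum below is unaffected.) *)
Definition admissible_curve (gx gy : R -> R) (z1 z2 : R * R) : Prop :=
  (forall t, 0 <= t <= 1 ->
     ex_derive gx t /\ ex_derive gy t /\
     continuous (Derive gx) t /\ continuous (Derive gy) t /\
     in_strip (gx t, gy t)) /\
  (gx 0, gy 0) = z1 /\ (gx 1, gy 1) = z2.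

Definition hyp_length (gx gy : R -> R) : R :=
  RInt (fun t => rho_S (gx t, gy t) *
                 sqrt (Derive gx t ^ 2 + Derive gy t ^ 2)) 0 1.

Definition d_S (z1 z2 : R * R) : Rbar :=
  Glb_Rbar (fun L => exists gx gy, admissible_curve gx gy z1 z2 /\ L = hyp_length gx gy).

Definition lambda (r : R) : R := ln ((1 + r) / (1 - r)).

Definition closed_disc_S (rad : R) (z : R * R) : Prop :=
  in_strip z /\ Rbar_le (d_S z (0, 0)) (Finite rad).

From Stdlib Require Import Reals Lra Psatz.
From Coquelicot Require Import Coquelicot.
Open Scope R_scope.

(* H(x) = ln ((1 + sin (pi x / 2)) / cos (pi x / 2)) is an odd, increasing primitive of the
   density x |-> rho_S(x) on the real axis, and H((4/pi) atan r) = lambda(r).  Along a curve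
   gamma from z to 0 we have rho_S >= pi/2 and |gamma'| >= |Re gamma'|, |Im gamma'|, so its
   length is at least |H(Re z)| and (pi/2) |Im z|: this gives the rectangle.  Conversely the
   segment from a to 0 has length |H(a)|, so every real a with |a| <= (4/pi) atan r lies in
   the disc. *)

Lemma cos_half_pi_pos (x : R) : -1 < x < 1 -> 0 < cos (PI / 2 * x).
Proof. intros hx. pose proof PI_RGT_0. apply cos_gt_0; nra. Qed.

Lemma rho_S_ge (z : R * R) : in_strip z -> PI / 2 <= rho_S z.
Proof.
  intros hz. pose proof (cos_half_pi_pos _ hz) as hc.
  pose proof (COS_bound (PI / 2 * ReP z)). pose proof PI2_RGT_0.
  unfold rho_S. set (c := cos (PI / 2 * ReP z)) in *.
  apply Rmult_le_reg_r with c; [lra|].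
  replace (PI / 2 / c * c) with (PI / 2) by (field; lra). nra.
Qed.

Definition rho_S_prim (x : R) : R := ln ((1 + sin (PI / 2 * x)) / cos (PI / 2 * x)).

Lemma one_add_sin_half_pi_pos (x : R) : -1 < x < 1 -> 0 < 1 + sin (PI / 2 * x).
Proof.
  intros hx. pose proof (cos_half_pi_pos x hx). pose proof (sin2_cos2 (PI / 2 * x)).
  unfold Rsqr in *. nra.
Qed.

Lemma is_derive_rho_S_prim (x : R) : -1 < x < 1 -> is_derive rho_S_prim x (rho_S (x, 0)).
Proof.
  intros hx. pose proof (cos_half_pi_pos x hx) as hc.
  pose proof (one_add_sin_half_pi_pos x hx) as hs.
  pose proof (sin2_cos2 (PI / 2 * x)) as e. unfold Rsqr in e.
  unfold rho_S_prim, rho_S, ReP; simpl. auto_derive.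
  - repeat split; try lra. apply Rdiv_lt_0_compat; lra.
  - set (s := sin (PI / 2 * x)) in *. set (c := cos (PI / 2 * x)) in *.
    field_simplify_eq; [|lra..].
    transitivity (PI * (s * s + c * c) + PI * s); [ring | rewrite e; ring].
Qed.

Lemma continuous_rho_S_real (x : R) : -1 < x < 1 -> continuous (fun u => rho_S (u, 0)) x.
Proof.
  intros hx. apply (ex_derive_continuous (K := R_AbsRing) (V := R_NormedModule)).
  unfold rho_S, ReP; simpl. pose proof (cos_half_pi_pos x hx). auto_derive. lra.
Qed.

Lemma rho_S_prim_0 : rho_S_prim 0 = 0.
Proof. unfold rho_S_prim. rewrite Rmult_0_r, sin_0, cos_0, Rplus_0_r, Rdiv_1_r. apply ln_1. Qed.

Lemma rho_S_prim_opp (x : R) : -1 < x < 1 -> rho_S_prim (- x) = - rho_S_prim x.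
Proof.
  intros hx. pose proof (cos_half_pi_pos x hx) as hc.
  pose proof (one_add_sin_half_pi_pos x hx) as hs.
  pose proof (sin2_cos2 (PI / 2 * x)) as e. unfold Rsqr in e.
  unfold rho_S_prim. rewrite <- ln_Rinv by (apply Rdiv_lt_0_compat; lra).
  replace (PI / 2 * - x) with (- (PI / 2 * x)) by ring. rewrite sin_neg, cos_neg.
  f_equal. field_simplify_eq; nra.
Qed.

Lemma rho_S_prim_lt (x y : R) : -1 < x -> x < y -> y < 1 -> rho_S_prim x < rho_S_prim y.
Proof.
  intros hx hxy hy.
  destruct (MVT_gen rho_S_prim x y (fun u => rho_S (u, 0))) as [c [hc e]];
    rewrite Rmin_left, Rmax_right in * by lra.
  - intros u hu. apply is_derive_rho_S_prim. lra.
  - intros u hu. apply continuity_pt_filterlim.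
    apply (ex_derive_continuous (K := R_AbsRing) (V := R_NormedModule)).
    eexists. apply is_derive_rho_S_prim. lra.
  - assert (PI / 2 <= rho_S (c, 0)) by (apply rho_S_ge; unfold in_strip, ReP; simpl; lra).
    pose proof PI2_RGT_0. nra.
Qed.

Lemma rho_S_prim_le (x y : R) : -1 < x < 1 -> -1 < y < 1 ->
  (rho_S_prim x <= rho_S_prim y <-> x <= y).
Proof.
  intros hx hy. split; intros h.
  - destruct (Rle_or_lt x y) as [|hlt]; [assumption|].
    pose proof (rho_S_prim_lt y x ltac:(lra) hlt ltac:(lra)). lra.
  - destruct (Rle_lt_or_eq_dec _ _ h) as [hlt|<-]; [|lra].
    left. apply rho_S_prim_lt; lra.
Qed.

Lemma atan_scaled_bound (r : R) : -1 < r < 1 -> -1 < 4 / PI * atan r < 1.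
Proof.
  intros hr. pose proof PI_RGT_0.
  assert (atan (-1) < atan r < atan 1) by (split; apply atan_increasing; lra).
  replace (atan (-1)) with (- atan 1) in * by (rewrite <- atan_opp; f_equal; ring).
  rewrite atan_1 in *.
  split; apply Rmult_lt_reg_l with (PI / 4); try lra; field_simplify; lra.
Qed.

Lemma rho_S_prim_atan (r : R) : -1 < r < 1 -> rho_S_prim (4 / PI * atan r) = lambda r.
Proof.
  intros hr. pose proof PI_RGT_0.
  unfold rho_S_prim, lambda.
  replace (PI / 2 * (4 / PI * atan r)) with (2 * atan r) by (field; lra).
  rewrite sin_2a, cos_2a, sin_atan, cos_atan.
  assert (hq : 0 < sqrt (1 + r²)) by (apply sqrt_lt_R0; unfold Rsqr; nra).
  assert (e : sqrt (1 + r²) * sqrt (1 + r²) = 1 + r * r) by (rewrite sqrt_sqrt; unfold Rsqr; nra).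
  f_equal. field_simplify_eq.
  - replace (sqrt (1 + r²) ^ 2) with (1 + r * r) by (rewrite <- e; ring). ring.
  - repeat split; nra.
Qed.

Lemma Rabs_rho_S_prim_le_lambda (x r : R) : -1 < x < 1 -> -1 < r < 1 ->
  (Rabs (rho_S_prim x) <= lambda r <-> Rabs x <= 4 / PI * atan r).
Proof.
  intros hx hr. pose proof (atan_scaled_bound r hr).
  rewrite <- (rho_S_prim_atan r hr), !Rabs_le_between, <- rho_S_prim_opp by lra.
  rewrite !rho_S_prim_le by lra. reflexivity.
Qed.

Lemma Rabs_sub_le_RInt (P dP f : R -> R) (a b : R) : a <= b ->
  (forall t, a <= t <= b -> is_derive P t (dP t)) ->
  (forall t, a <= t <= b -> continuous dP t) ->
  ex_RInt f a b ->
  (forall t, a < t < b -> Rabs (dP t) <= f t) ->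
  Rabs (P b - P a) <= RInt f a b.
Proof.
  intros hab hP hdP hf hle.
  assert (hI : is_RInt dP a b (P b - P a)).
  { apply (is_RInt_derive (V := R_CompleteNormedModule));
      rewrite Rmin_left, Rmax_right; auto. }
  rewrite <- (is_RInt_unique _ _ _ _ hI).
  apply Rle_trans with (RInt (fun t => Rabs (dP t)) a b).
  - apply abs_RInt_le; [assumption | eexists; exact hI].
  - apply RInt_le; auto. exact (ex_RInt_norm _ _ _ (ex_intro _ _ hI)).
Qed.

Lemma Rabs_le_sqrt_sum_sq (a b : R) : Rabs a <= sqrt (a ^ 2 + b ^ 2).
Proof. rewrite <- sqrt_Rsqr_abs. apply sqrt_le_1_alt. unfold Rsqr. nra. Qed.

Definition hyp_speed (gx gy : R -> R) (t : R) : R :=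
  rho_S (gx t, gy t) * sqrt (Derive gx t ^ 2 + Derive gy t ^ 2).

Lemma ex_RInt_hyp_speed (gx gy : R -> R) (z1 z2 : R * R) :
  admissible_curve gx gy z1 z2 -> ex_RInt (hyp_speed gx gy) 0 1.
Proof.
  intros [hc _]. apply (ex_RInt_continuous (V := R_CompleteNormedModule)).
  rewrite Rmin_left, Rmax_right by lra. intros t ht.
  destruct (hc t ht) as [dx [_ [cx [cy st]]]].
  apply (continuous_mult (K := R_AbsRing)).
  - apply (continuous_comp gx (fun u => rho_S (u, 0))).
    + exact (ex_derive_continuous (K := R_AbsRing) (V := R_NormedModule) _ _ dx).
    + exact (continuous_rho_S_real _ st).
  - apply continuous_sqrt_comp, (continuous_plus (V := R_NormedModule));
      apply (continuous_comp _ (fun y => y ^ 2)); auto;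
      apply (ex_derive_continuous (K := R_AbsRing) (V := R_NormedModule)); auto_derive; auto.
Qed.

Lemma hyp_length_ge_Re (gx gy : R -> R) (z1 z2 : R * R) :
  admissible_curve gx gy z1 z2 ->
  Rabs (rho_S_prim (ReP z2) - rho_S_prim (ReP z1)) <= hyp_length gx gy.
Proof.
  intros hg. pose proof (ex_RInt_hyp_speed _ _ _ _ hg) as hint.
  destruct hg as [hc [<- <-]].
  apply (Rabs_sub_le_RInt (fun t => rho_S_prim (gx t)) (fun t => rho_S (gx t, 0) * Derive gx t));
    [lra | | | exact hint |]; intros t ht; destruct (hc t ltac:(lra)) as [dx [_ [cx [_ st]]]].
  - rewrite Rmult_comm. apply (is_derive_comp rho_S_prim gx).
    + exact (is_derive_rho_S_prim _ st).
    + exact (Derive_correct _ _ dx).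
  - apply (continuous_mult (K := R_AbsRing)); [|exact cx].
    apply (continuous_comp gx (fun u => rho_S (u, 0))); [|exact (continuous_rho_S_real _ st)].
    exact (ex_derive_continuous (K := R_AbsRing) (V := R_NormedModule) _ _ dx).
  - pose proof (rho_S_ge _ st). pose proof PI2_RGT_0.
    change (rho_S (gx t, 0)) with (rho_S (gx t, gy t)).
    rewrite Rabs_mult, (Rabs_pos_eq (rho_S _)) by lra.
    apply Rmult_le_compat_l; [lra | apply Rabs_le_sqrt_sum_sq].
Qed.

Lemma hyp_length_ge_Im (gx gy : R -> R) (z1 z2 : R * R) :
  admissible_curve gx gy z1 z2 ->
  PI / 2 * Rabs (ImP z2 - ImP z1) <= hyp_length gx gy.
Proof.
  intros hg. pose proof (ex_RInt_hyp_speed _ _ _ _ hg) as hint. pose proof PI2_RGT_0.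
  destruct hg as [hc [<- <-]].
  rewrite <- (Rabs_pos_eq (PI / 2)), <- Rabs_mult, Rmult_minus_distr_l by lra.
  apply (Rabs_sub_le_RInt (fun t => PI / 2 * gy t) (fun t => PI / 2 * Derive gy t));
    [lra | | | exact hint |]; intros t ht; destruct (hc t ltac:(lra)) as [_ [dy [_ [cy st]]]].
  - apply is_derive_scal, Derive_correct, dy.
  - apply (continuous_mult (K := R_AbsRing)); [apply continuous_const | exact cy].
  - pose proof (rho_S_ge _ st).
    rewrite Rabs_mult, (Rabs_pos_eq (PI / 2)) by lra.
    apply Rmult_le_compat; [lra | apply Rabs_pos | lra |].
    rewrite Rplus_comm. apply Rabs_le_sqrt_sum_sq.
Qed.

Lemma d_S_ge (z1 z2 : R * R) (m : R) :
  (forall gx gy, admissible_curve gx gy z1 z2 -> m <= hyp_length gx gy) ->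
  Rbar_le m (d_S z1 z2).
Proof. intros h. apply Glb_Rbar_correct. intros L [gx [gy [hg ->]]]. exact (h gx gy hg). Qed.

Lemma d_S_le_hyp_length (gx gy : R -> R) (z1 z2 : R * R) :
  admissible_curve gx gy z1 z2 -> Rbar_le (d_S z1 z2) (hyp_length gx gy).
Proof. intros hg. apply Glb_Rbar_correct. exists gx, gy. auto. Qed.

Lemma Derive_affine (a b t : R) : Derive (fun u => a + u * (b - a)) t = b - a.
Proof. apply is_derive_unique. auto_derive; auto. ring. Qed.

Section Segment.

Variables a b : R.
Hypothesis ha : -1 < a < 1.
Hypothesis hb : -1 < b < 1.

Let g (t : R) : R := a + t * (b - a).

Lemma segment_in_strip (t : R) : 0 <= t <= 1 -> -1 < g t < 1.
Proof.
  intros ht. unfold g.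
  assert (0 <= (1 - t) * (a + 1) /\ 0 <= t * (b + 1)) by (split; apply Rmult_le_pos; lra).
  assert (0 <= (1 - t) * (1 - a) /\ 0 <= t * (1 - b)) by (split; apply Rmult_le_pos; lra).
  split; nra.
Qed.

Lemma segment_admissible : admissible_curve g (fun _ => 0) (a, 0) (b, 0).
Proof.
  split; [|unfold g; split; f_equal; ring].
  intros t ht. repeat split.
  - unfold g. auto_derive. auto.
  - apply ex_derive_const.
  - apply (continuous_ext (fun _ => b - a)); [intros; symmetry; apply Derive_affine | apply continuous_const].
  - apply (continuous_ext (fun _ => 0)); [intros; symmetry; apply Derive_const | apply continuous_const].
  - apply segment_in_strip, ht.
  - apply segment_in_strip, ht.
Qed.

Lemma hyp_length_segment_le : hyp_length g (fun _ => 0) <= Rabs (rho_S_prim b - rho_S_prim a).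
Proof.
  assert (hs : exists s, Rabs s = 1 /\ Rabs (b - a) = s * (b - a)).
  { destruct (Rle_or_lt 0 (b - a)).
    - exists 1. rewrite Rabs_R1, Rabs_pos_eq by lra. split; ring.
    - exists (-1). split; rewrite Rabs_left by lra; ring. }
  destruct hs as [s [hs1 hs]].
  unfold hyp_length.
  rewrite (RInt_ext _ (fun t => s * ((b - a) * rho_S (g t, 0)))).
  2: { intros t _. unfold g. rewrite Derive_affine, Derive_const.
       replace ((b - a) ^ 2 + 0 ^ 2) with (Rsqr (b - a)) by (unfold Rsqr; ring).
       rewrite sqrt_Rsqr_abs, hs. simpl. ring. }
  assert (hI : is_RInt (fun t => s * ((b - a) * rho_S (g t, 0))) 0 1
                 (minus (s * rho_S_prim (g 1)) (s * rho_S_prim (g 0)))).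
  { apply (is_RInt_derive (V := R_CompleteNormedModule) (fun t => s * rho_S_prim (g t)));
      rewrite Rmin_left, Rmax_right by lra; intros t ht.
    - apply (is_derive_scal (fun t => rho_S_prim (g t))).
      apply (is_derive_comp rho_S_prim g).
      + apply is_derive_rho_S_prim, segment_in_strip, ht.
      + unfold g. auto_derive; auto. ring.
    - apply (continuous_mult (K := R_AbsRing)); [apply continuous_const|].
      apply (continuous_mult (K := R_AbsRing)); [apply continuous_const|].
      apply (continuous_comp g (fun u => rho_S (u, 0))).
      + unfold g. apply (ex_derive_continuous (K := R_AbsRing) (V := R_NormedModule)).
        auto_derive. auto.
      + apply continuous_rho_S_real, segment_in_strip, ht. }
  rewrite (is_RInt_unique _ _ _ _ hI).
  replace (g 1) with b by (unfold g; ring). replace (g 0) with a by (unfold g; ring).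
  unfold minus, plus, opp; simpl.
  replace (s * rho_S_prim b + - (s * rho_S_prim a)) with (s * (rho_S_prim b - rho_S_prim a)) by ring.
  rewrite <- (Rmult_1_l (Rabs (rho_S_prim b - rho_S_prim a))), <- hs1, <- Rabs_mult.
  apply RRle_abs.
Qed.

End Segment.

Lemma closed_disc_S_bounds (rad : R) (z : R * R) : closed_disc_S rad z ->
  Rabs (rho_S_prim (ReP z)) <= rad /\ PI / 2 * Rabs (ImP z) <= rad.
Proof.
  intros [_ hd].
  assert (hRe := d_S_ge z (0, 0) _ (fun gx gy hg => hyp_length_ge_Re gx gy _ _ hg)).
  assert (hIm := d_S_ge z (0, 0) _ (fun gx gy hg => hyp_length_ge_Im gx gy _ _ hg)).
  change (ReP (0, 0)) with 0 in hRe. change (ImP (0, 0)) with 0 in hIm.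
  rewrite rho_S_prim_0, Rminus_0_l, Rabs_Ropp in hRe.
  rewrite Rminus_0_l, Rabs_Ropp in hIm.
  split; [exact (Rbar_le_trans _ _ _ hRe hd) | exact (Rbar_le_trans _ _ _ hIm hd)].
Qed.

Lemma closed_disc_S_real (rad a : R) : -1 < a < 1 -> Rabs (rho_S_prim a) <= rad ->
  closed_disc_S rad (a, 0).
Proof.
  intros ha hle. split; [exact ha|].
  assert (h0 : -1 < 0 < 1) by lra.
  apply (Rbar_le_trans _ _ _ (d_S_le_hyp_length _ _ _ _ (segment_admissible a 0 ha h0))).
  simpl. eapply Rle_trans; [apply hyp_length_segment_le; assumption|].
  rewrite rho_S_prim_0, Rminus_0_l, Rabs_Ropp. exact hle.
Qed.

Theorem lemma1 (r : R) (hr : 0 < r < 1) :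
  (forall z : R * R, closed_disc_S (lambda r) z ->
     - (4 / PI) * atan r <= ReP z <= (4 / PI) * atan r /\
     - (2 / PI) * lambda r <= ImP z <= (2 / PI) * lambda r) /\
  (forall a : R,
     (exists z : R * R, closed_disc_S (lambda r) z /\ ReP z = a) <->
     - (4 / PI) * atan r <= a <= (4 / PI) * atan r).
Proof.
  pose proof PI_RGT_0. assert (hr' : -1 < r < 1) by lra.
  assert (hRe : forall z, closed_disc_S (lambda r) z -> Rabs (ReP z) <= 4 / PI * atan r).
  { intros z hz. apply (Rabs_rho_S_prim_le_lambda _ r (proj1 hz) hr').
    apply (closed_disc_S_bounds _ _ hz). }
  rewrite <- !Ropp_mult_distr_l. split.
  - intros z hz. rewrite <- !Rabs_le_between. split; [exact (hRe z hz)|].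
    apply Rmult_le_reg_l with (PI / 2); [lra|].
    replace (PI / 2 * (2 / PI * lambda r)) with (lambda r) by (field; lra).
    apply (closed_disc_S_bounds _ _ hz).
  - intros a. rewrite <- Rabs_le_between. split.
    + intros [z [hz <-]]. exact (hRe z hz).
    + intros ha. pose proof (atan_scaled_bound r hr').
      assert (ha' : -1 < a < 1) by (apply Rabs_le_between in ha; lra).
      exists (a, 0). split; [|reflexivity].
      apply closed_disc_S_real; [exact ha'|].
      apply Rabs_rho_S_prim_le_lambda; assumption.
Qed.
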